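(* For each $n\in\mathbb{N}$, let $\ell_n\in\mathcal{D}^-[0,\infty)$, $r_n\in\mathcal{D}^+[0,\infty)$ with $\ell_n\le r_n$, and let $\psi_n\in\mathcal{D}[0,\infty)$. Suppose there exist $\ell\in\mathcal{D}^-[0,\infty)$, $r\in\mathcal{D}^+[0,\infty)$ and $\psi\in\mathcal{D}[0,\infty)$ such that $\psi_n\to\psi$, $\ell_n\to\ell$ and $r_n\to r$ uniformly on compacts as $n\to\infty$. Suppose for each $n$, $(\phi_n,\eta_n)$ solves the ESP on $[\ell_n(\cdot),r_n(\cdot)]$ for $\psi_n$. If $\phi_n\to\phi$ uniformly on compacts, then $(\phi,\phi-\psi)$ solves the ESP on $[\ell(\cdot),r(\cdot)]$ for $\psi$.
   Context: $\mathcal{D}[0,\infty)$ denotes the càdlàg functions $[0,\infty)\to(-\infty,\infty)$; $\mathcal{D}^-[0,\infty)$ (resp. $\mathcal{D}^+[0,\infty)$) denotes càdlàg functions with values in $[-\infty,\infty)$ (resp. $(-\infty,\infty]$). $f_n\to f$ uniformly on compacts means $\sup_{s\in[0,T]}|f_n(s)-f(s)|\to0$ for every $T<\infty$. ESP: given $\ell\in\mathcal{D}^-[0,\infty)$, $r\in\mathcal{D}^+[0,\infty)$ with $\ell\le r$ and $\psi\in\mathcal{D}[0,\infty)$, $(\phi,\eta)\in\mathcal{D}[0,\infty)^2$ solves the ESP on $[\ell(\cdot),r(\cdot)]$ for $\psi$ if (1) $\phi(t)=\psi(t)+\eta(t)\in[\ell(t),r(t)]$ for all $t\ge0$; (2)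 for all $0\le s\le t$: $\eta(t)-\eta(s)\ge0$ if $\phi(u)<r(u)$ for all $u\in(s,t]$, and $\eta(t)-\eta(s)\le0$ if $\phi(u)>\ell(u)$ for all $u\in(s,t]$; (3) for all $t\ge0$: $\eta(t)-\eta(t-)\ge0$ if $\phi(t)<r(t)$, and $\eta(t)-\eta(t-)\le0$ if $\phi(t)>\ell(t)$, where $\eta(0-)=0$. *)

From HB Require Import structures.
From mathcomp Require Import all_boot all_order all_algebra.
From mathcomp Require Import all_classical all_reals all_analysis.
Set Implicit Arguments. Unset Strict Implicit. Unset Printing Implicit Defensive.
Import Order.TTheory GRing.Theory Num.Theory.
Import numFieldNormedType.Exports.
Local Open Scope classical_set_scope.
Local Open Scope ring_scope.

Section Defs.
Context {R : realType}.

Definition cadlag {T : topologicalType} (f : R -> T) : Prop :=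
  (forall t : R, 0 <= t -> f x @[x --> t^'+] --> f t) /\
  (forall t : R, 0 < t -> exists y : T, f x @[x --> t^'-] --> y).

Definition D0 (f : R -> R) : Prop := cadlag f.
Definition Dminus (f : R -> \bar R) : Prop :=
  cadlag f /\ forall t, 0 <= t -> f t != +oo%E.
Definition Dplus (f : R -> \bar R) : Prop :=
  cadlag f /\ forall t, 0 <= t -> f t != -oo%E.

(* distance on \bar R: |a-b|, with |(+-oo) - (+-oo)| = 0 for equal infinities *)
Definition edist (a b : \bar R) : \bar R :=
  if a == b then 0%E else `|(a - b)%E|%E.

Definition ucc (fn : nat -> R -> R) (f : R -> R) : Prop :=
  forall T : R, forall e : R, 0 < e ->
    \forall n \near \oo, forall s : R, 0 <= s <= T -> `|fn n s - f s| <= e.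

Definition ucc_e (fn : nat -> R -> \bar R) (f : R -> \bar R) : Prop :=
  forall T : R, forall e : R, 0 < e ->
    \forall n \near \oo, forall s : R, 0 <= s <= T ->
      (edist (fn n s) (f s) <= e%:E)%E.

(* left limit, with the convention eta(0-) = 0 *)
Definition leftlim (eta : R -> R) (t : R) : R :=
  if t == 0 then 0 else lim (eta x @[x --> t^'-]).

Definition ESP (l r : R -> \bar R) (psi phi eta : R -> R) : Prop :=
  [/\ D0 phi, D0 eta,
   (forall t, 0 <= t -> phi t = psi t + eta t /\
                         (l t <= (phi t)%:E <= r t)%E),
   (forall s t, 0 <= s <= t ->
      ((forall u, s < u <= t -> ((phi u)%:E < r u)%E) -> eta t - eta s >= 0) /\
      ((forall u, s < u <= t -> (l u < (phi u)%:E)%E) -> eta t - eta s <= 0)) &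
   (forall t, 0 <= t ->
      (((phi t)%:E < r t)%E -> eta t - leftlim eta t >= 0) /\
      ((l t < (phi t)%:E)%E -> eta t - leftlim eta t <= 0))].

End Defs.

From Pilot Require Import Defs.
From HB Require Import structures.
From mathcomp Require Import all_boot all_order all_algebra.
From mathcomp Require Import all_classical all_reals all_analysis.
From mathcomp Require Import lra.
Import Order.TTheory GRing.Theory Num.Theory.
Import numFieldNormedType.Exports.
(* mathcomp-analysis has an [edist] of its own; [Defs.edist] must win. *)
Import Pilot.Defs.
Local Open Scope classical_set_scope.
Local Open Scope ring_scope.

(* The ESP conditions split into those involving the upper barrier r and those
   involving the lower barrier l, and the latter are the former for (-phi, -eta)
   below -l; so it suffices to pass the r-conditions to the limit, where
   eta = phi - psi is the uniform limit of the eta_n.  The constraint phi <= r is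
   closed.  If phi u < r u, right continuity of phi and r keeps phi_n < r_n on
   some [u, u + d] for all large n, so there the eta_n are nondecreasing and
   have no downward jump, and both properties survive uniform convergence.
   A supremum argument turns this local right monotonicity, together with
   eta(u-) <= eta(u), into monotonicity of eta on every interval (s, t] on
   which phi < r. *)

Section ExtendedDistance.
Context {R : realType}.
Implicit Types (a b : \bar R) (x e : R).

Lemma edist_fin (x y : R) : edist x%:E y%:E = `|x - y|%:E.
Proof. by rewrite /edist; case: eqP => [[->]|//]; rewrite subrr normr0. Qed.

Lemma edistC a b : edist a b = edist b a.
Proof.
by case: a => [a||]; case: b => [b||] //; rewrite !edist_fin distrC.
Qed.

Lemma edistN a b : edist (- a) (- b) = edist a b.
Proof.
case: a => [a||]; case: b => [b||] //=; rewrite ?edist_fin //.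
by rewrite -opprD normrN.
Qed.

Lemma lee_edist {a b x e} : (edist a b <= e%:E)%E -> (x%:E <= a)%E ->
  ((x - e)%:E <= b)%E.
Proof.
case: a => [a||]; case: b => [b||] //=; rewrite ?edist_fin ?lee_fin.
- by rewrite ler_norml; lra.
- by move=> _ _; rewrite leey.
Qed.

Lemma lte_edist {a b x e} : (edist a b <= e%:E)%E -> (x%:E < a)%E ->
  ((x - e)%:E < b)%E.
Proof.
case: a => [a||]; case: b => [b||] //=; rewrite ?edist_fin ?lee_fin ?lte_fin.
- by rewrite ler_norml; lra.
- by move=> _ _; rewrite ltry.
Qed.

Lemma lte_EFin_dense x a : (x%:E < a)%E -> exists2 c : R, x < c & (c%:E < a)%E.
Proof.
case: a => [a||] //=; last by exists (x + 1); [lra | rewrite ltry].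
by rewrite lte_fin => xa; exists ((x + a) / 2); rewrite ?lte_fin; lra.
Qed.

End ExtendedDistance.

Lemma near_right_closed {R : realType} (u : R) (P : R -> Prop) :
  P u -> (\forall x \near u^'+, P x) ->
  exists2 d, 0 < d & forall x, u <= x <= u + d -> P x.
Proof.
move=> Pu /nbhs_ballP[e /= e0 he]; exists (e / 2); first by rewrite divr_gt0.
move=> x /andP[ux xu]; have [<-//|uxn] := eqVneq u x.
apply: he; last by rewrite lt_neqAle uxn.
by rewrite /= -ball_normE /= ltr_norml; apply/andP; split; lra.
Qed.

Section UniformConvergenceOnCompacts.
Context {R : realType}.
Implicit Types (fn gn : nat -> R -> R) (f g : R -> R).

Lemma uccB {fn gn f g} : ucc fn f -> ucc gn g ->
  ucc (fun n x => fn n x - gn n x) (fun x => f x - g x).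
Proof.
move=> hf hg T e e0; have e2 : 0 < e / 2 by rewrite divr_gt0.
apply: filterS2 (hf T _ e2) (hg T _ e2) => n hfn hgn s hs.
move: (hfn s hs) (hgn s hs); rewrite !ler_norml => /andP[? ?] /andP[? ?].
by apply/andP; split; lra.
Qed.

Lemma uccN {fn f} : ucc fn f -> ucc (fun n x => - fn n x) (fun x => - f x).
Proof.
move=> hf T e e0; apply: filterS (hf T _ e0) => n hfn s hs.
by rewrite -opprD normrN; exact: hfn.
Qed.

Lemma ucc_eq {fn gn f} : ucc fn f -> (forall n x, 0 <= x -> fn n x = gn n x) ->
  ucc gn f.
Proof.
move=> hf efg T e e0; apply: filterS (hf T _ e0) => n hfn s hs.
by rewrite -efg; [exact: hfn | case/andP: hs].
Qed.

Lemma ucc_eN {fn : nat -> R -> \bar R} {f : R -> \bar R} : ucc_e fn f ->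
  ucc_e (fun n x => - fn n x)%E (fun x => - f x)%E.
Proof.
move=> hf T e e0; apply: filterS (hf T _ e0) => n hfn s hs.
by rewrite edistN; exact: hfn.
Qed.

Lemma D0B {f g} : D0 f -> D0 g -> D0 (fun x => f x - g x).
Proof.
move=> [fr fl] [gr gl]; split=> t t0; first exact: cvgB (fr t t0) (gr t t0).
have [yf hf] := fl t t0; have [yg hg] := gl t t0.
by exists (yf - yg); exact: cvgB.
Qed.

Lemma D0N {f} : D0 f -> D0 (fun x => - f x).
Proof.
move=> [fr fl]; split=> t t0; first exact: cvgN (fr t t0).
by have [y hy] := fl t t0; exists (- y); exact: cvgN.
Qed.

Section UniformLimit.
Context {fn : nat -> R -> R} {f : R -> R}.
Hypotheses (hu : ucc fn f) (hD : forall n, D0 (fn n)).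

Lemma ucc_right_cont t : 0 <= t -> f x @[x --> t^'+] --> f t.
Proof.
move=> t0; apply/cvgrPdist_le => e e0; have e3 : 0 < e / 3 by rewrite divr_gt0.
have [n hn] := filter_ex (hu (t + 1) _ e3).
have /cvgrPdist_le /(_ _ e3) fnt := (hD n).1 t t0.
have ht : 0 <= t <= t + 1 by rewrite t0 /=; lra.
near=> x.
have hx : 0 <= x <= t + 1.
  apply/andP; split; first by apply: (le_trans t0); near: x; exact: nbhs_right_ge.
  by near: x; apply: nbhs_right_le; lra.
have : `|fn n t - fn n x| <= e / 3 by near: x.
move: (hn x hx) (hn t ht); rewrite !ler_norml => /andP[? ?] /andP[? ?] /andP[? ?].
by apply/andP; split; lra.
Unshelve. all: by end_near.
Qed.

Lemma ucc_left_cvg t : 0 < t -> cvg (f x @[x --> t^'-]).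
Proof.
move=> t0; apply: cauchy_cvg; apply: cauchy_exP => e e0.
have e3 : 0 < e / 3 by rewrite divr_gt0.
have [n hn] := filter_ex (hu t _ e3).
have [y /cvgrPdist_le /(_ _ e3) fny] := (hD n).2 t t0.
exists y; suff : \forall x \near t^'-, ball y e (f x) by [].
near=> x.
have hx : 0 <= x <= t.
  apply/andP; split; first by apply: ltW; near: x; exact: nbhs_left_gt.
  by near: x; exact: nbhs_left_le.
have : `|y - fn n x| <= e / 3 by near: x.
rewrite -ball_normE /=; move: (hn x hx).
rewrite !ler_norml ltr_norml => /andP[? ?] /andP[? ?].
by apply/andP; split; lra.
Unshelve. all: by end_near.
Qed.

Lemma ucc_D0 : D0 f.
Proof.
split=> [t|t t0]; first exact: ucc_right_cont.
by exists (lim (f x @[x --> t^'-])); exact: ucc_left_cvg.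
Qed.

End UniformLimit.

Lemma leftlim_cvg {f t y} : 0 < t -> f x @[x --> t^'-] --> y -> leftlim f t = y.
Proof. by move=> t0 fy; rewrite /leftlim gt_eqF //; exact: cvg_lim. Qed.

Lemma leftlimN f t : D0 f -> 0 <= t ->
  leftlim (fun x => - f x) t = - leftlim f t.
Proof.
move=> [_ fl] t0; have [->|tn0] := eqVneq t 0.
  by rewrite /leftlim eqxx oppr0.
have {t0 tn0}t0 : 0 < t by rewrite lt_neqAle eq_sym tn0.
have [y fy] := fl t t0.
by rewrite (leftlim_cvg t0 fy); apply: leftlim_cvg t0 _; exact: cvgN.
Qed.

Lemma leftlim_ucc {fn f t e} : ucc fn f -> (forall n, D0 (fn n)) -> D0 f ->
  0 <= t -> 0 < e -> \forall n \near \oo, `|leftlim (fn n) t - leftlim f t| <= e.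
Proof.
move=> hu hDn hD t0 e0; have [->|tn0] := eqVneq t 0.
  by near=> n; rewrite /leftlim eqxx subrr normr0 ltW.
have {t0 tn0}t0 : 0 < t by rewrite lt_neqAle eq_sym tn0.
have [y fy] := hD.2 t t0; rewrite (leftlim_cvg t0 fy).
apply: filterS (hu t _ e0) => n hn.
have [yn fny] := (hDn n).2 t t0; rewrite (leftlim_cvg t0 fny).
apply: ler_cvg_to (cvg_norm (cvgB fny fy)) (cvg_cst e) _.
near=> x; apply: hn; apply/andP; split.
  by apply: ltW; near: x; exact: nbhs_left_gt.
by near: x; exact: nbhs_left_le.
Unshelve. all: by end_near.
Qed.

End UniformConvergenceOnCompacts.

Section RealInduction.
Context {R : realType}.
Variable f : R -> R.

Lemma le_of_locally_nondecreasing a t : a <= t ->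
  (forall u, a < u <= t -> exists2 y, f x @[x --> u^'-] --> y & y <= f u) ->
  (forall u, a <= u < t -> exists2 d, 0 < d &
     forall v, u <= v <= u + d -> f u <= f v) ->
  f a <= f t.
Proof.
move=> a_t hl hr.
pose S := [set x | a <= x <= t /\ forall y, a <= y <= x -> f a <= f y].
have Sa : S a.
  split=> [|y /andP[ay ya]]; first by rewrite lexx.
  by have -> : y = a by apply/le_anti; rewrite ya ay.
have supS : has_sup S by split; [exists a | exists t => x [/andP[]]].
set x := sup S.
have ax : a <= x := sup_upper_bound supS Sa.
have xt : x <= t by apply: ge_sup; [exists a | move=> y [/andP[]]].
have below y : a <= y < x -> f a <= f y.
  move=> /andP[ay yx]; have yx0 : 0 < x - y by rewrite subr_gt0.
  have [z [_ hz] yz] := sup_adherent yx0 supS.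
  by apply: hz; rewrite ay /=; apply: ltW; rewrite -/x in yz; lra.
have fax : f a <= f x.
  have [<-//|ax'] := eqVneq a x.
  have {ax'}a_lt_x : a < x by rewrite lt_neqAle ax' ax.
  have /hl[y fy yx] : a < x <= t by rewrite a_lt_x.
  apply: le_trans yx; apply: ler_cvg_to (cvg_cst _) fy _.
  near=> v; apply: below; apply/andP; split.
    by near: v; apply: nbhs_left_ge.
  by near: v; exact: nbhs_left_lt.
have Sx y : a <= y <= x -> f a <= f y.
  move=> /andP[ay yx]; have [y_lt_x|x_le_y] := ltP y x.
    by apply: below; rewrite ay.
  by have -> : y = x by apply/le_anti; rewrite yx.
have [x_lt_t|t_le_x] := ltP x t; last first.
  by have <- : x = t by apply/le_anti; rewrite xt.
(* Local monotonicity at x < t would push S beyond its supremum. *)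
have /hr[d d0 hd] : a <= x < t by rewrite ax.
pose x' := Order.min (x + d) t.
have Sx' : S x'.
  split; first by rewrite le_min ge_min lexx orbT andbT; apply/andP; split; lra.
  move=> y /andP[ay yx']; have [y_le_x|x_lt_y] := leP y x.
    by apply: Sx; rewrite ay.
  apply: le_trans fax _; apply: hd; apply/andP; split; first exact: ltW.
  by apply: le_trans yx' _; rewrite ge_min lexx.
have : x < x' by rewrite lt_min x_lt_t andbT; lra.
by rewrite ltNge sup_upper_bound.
Unshelve. all: by end_near.
Qed.

Lemma le_of_locally_nondecreasing_oc s t : s <= t ->
  f x @[x --> s^'+] --> f s ->
  (forall u, s < u <= t -> exists2 y, f x @[x --> u^'-] --> y & y <= f u) ->
  (forall u, s < u < t -> exists2 d, 0 < d &
     forall v, u <= v <= u + d -> f u <= f v) ->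
  f s <= f t.
Proof.
move=> s_t fs hl hr; have [<-//|st] := eqVneq s t.
have {st s_t}s_lt_t : s < t by rewrite lt_neqAle st.
apply: ler_cvg_to fs (cvg_cst (f t)) _; near=> v.
have sv : s < v by near: v; exact: nbhs_right_gt.
have vt : v <= t by near: v; exact: nbhs_right_le.
apply: le_of_locally_nondecreasing vt _ _ => u /andP[vu ut].
  by apply: hl; rewrite ut andbT; exact: lt_trans vu.
by apply: hr; rewrite ut andbT; exact: lt_le_trans vu.
Unshelve. all: by end_near.
Qed.

End RealInduction.

Definition ESP_upper {R : realType} (r : R -> \bar R) (phi eta : R -> R) :=
  [/\ forall t, 0 <= t -> ((phi t)%:E <= r t)%E,
      forall s t, 0 <= s <= t ->
        (forall u, s < u <= t -> ((phi u)%:E < r u)%E) -> eta s <= eta t &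
      forall t, 0 <= t -> ((phi t)%:E < r t)%E -> leftlim eta t <= eta t].

Lemma ESP_split {R : realType} (l r : R -> \bar R) (psi phi eta : R -> R) :
  ESP l r psi phi eta <->
  [/\ D0 phi, D0 eta, (forall t, 0 <= t -> phi t = psi t + eta t),
      ESP_upper r phi eta &
      ESP_upper (fun t => - l t)%E (fun t => - phi t) (fun t => - eta t)].
Proof.
have lowerE (x : R) (a : \bar R) : ((- x)%:E <= - a)%E = (a <= x%:E)%E.
  by rewrite EFinN leeN2.
have lower_ltE (x : R) (a : \bar R) : ((- x)%:E < - a)%E = (a < x%:E)%E.
  by rewrite EFinN lteN2.
split=> [[Dphi Deta hdec hint hjump]|].
  split=> //; first by move=> t /hdec[].
    split=> [t /hdec[_ /andP[]]//|s t /hint[+ _]|t t0 /(hjump t t0).1].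
      by rewrite subr_ge0.
    by rewrite subr_ge0.
  split=> [t /hdec[_ /andP[]]|s t /hint[_ +] hlt|t t0 hlt].
  - by rewrite lowerE.
  - by rewrite lerN2 -subr_le0; apply=> u /hlt; rewrite lower_ltE.
  - rewrite leftlimN // lerN2 -subr_le0; apply: (hjump t t0).2.
    by rewrite -lower_ltE.
move=> [Dphi Deta hdec [hr hint_r hjump_r] [hl hint_l hjump_l]].
split=> // [t t0|s t hst|t t0].
- by rewrite -lowerE hl // hr // hdec.
- split=> hlt; first by rewrite subr_ge0; exact: hint_r.
  by rewrite subr_le0 -lerN2; apply: hint_l hst _ => u /hlt; rewrite lower_ltE.
- split=> hlt; first by rewrite subr_ge0; exact: hjump_r.
  by rewrite subr_le0 -lerN2 -leftlimN //; apply: hjump_l; rewrite ?lower_ltE.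
Qed.

Section UpperBarrierLimit.
Context {R : realType} {phin etan : nat -> R -> R} {rn : nat -> R -> \bar R}
  {phi eta : R -> R} {r : R -> \bar R}.
Hypotheses (hphi : ucc phin phi) (heta : ucc etan eta) (hr : ucc_e rn r).
Hypotheses (Dphi : D0 phi) (Detan : forall n, D0 (etan n)) (Deta : D0 eta).
Hypothesis r_right : forall t, 0 <= t -> r x @[x --> t^'+] --> r t.
Hypothesis hup : forall n, ESP_upper (rn n) (phin n) (etan n).

Lemma limit_below_barrier t : 0 <= t -> ((phi t)%:E <= r t)%E.
Proof.
move=> t0; apply/lee_subgt0Pr => e e0; rewrite -EFinB.
have e2 : 0 < e / 2 by rewrite divr_gt0.
have [n [hphin hrn]] := filter_ex (filterI (hphi t _ e2) (hr t _ e2)).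
have tt : 0 <= t <= t by rewrite t0 lexx.
have [below _ _] := hup n.
have : ((phi t - e / 2)%:E <= rn n t)%E.
  apply: le_trans (below t t0); rewrite lee_fin.
  by move: (hphin t tt); rewrite ler_norml => /andP[]; lra.
by move/(lee_edist (hrn t tt)); rewrite -addrA -opprD -splitr.
Qed.

Lemma eventually_below_barrier {u} : 0 <= u -> ((phi u)%:E < r u)%E ->
  exists2 d, 0 < d & \forall n \near \oo,
    forall v, u <= v <= u + d -> ((phin n v)%:E < rn n v)%E.
Proof.
move=> u0 /lte_EFin_dense[c phi_c c_r].
(* The margin c - phi u covers the oscillation of phi near u and both
   uniform errors. *)
have g0 : 0 < (c - phi u) / 4 by rewrite divr_gt0 // subr_gt0.
have [d d0 hd] : exists2 d, 0 < d & forall v, u <= v <= u + d ->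
    (c%:E < r v)%E /\ `|phi u - phi v| <= (c - phi u) / 4.
  apply: near_right_closed; first by rewrite subrr normr0 ltW.
  near=> x; split; near: x; first exact: r_right u u0 _ (open_ereal_gt' c_r).
  by move/cvgrPdist_le : (Dphi.1 u u0) => /(_ _ g0).
exists d => //; apply: filterS2 (hphi (u + d) _ g0) (hr (u + d) _ g0).
move=> n hphin hrn v hv; have [c_rv phi_uv] := hd v hv.
have hv0 : 0 <= v <= u + d by case/andP: hv => uv ->; rewrite (le_trans u0 uv).
have := hrn v hv0; rewrite edistC => /lte_edist/(_ c_rv).
apply: le_lt_trans; rewrite lee_fin.
move: (hphin v hv0) phi_uv; rewrite !ler_norml => /andP[? ?] /andP[? ?]; lra.
Unshelve. all: by end_near.
Qed.

Lemma limit_leftlim_le t : 0 <= t -> ((phi t)%:E < r t)%E ->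
  leftlim eta t <= eta t.
Proof.
move=> t0 /(eventually_below_barrier t0)[d d0 hd].
apply/ler_addgt0Pr => e e0; have e2 : 0 < e / 2 by rewrite divr_gt0.
have [n [[hbelow hetan] hleft]] := filter_ex
  (filterI (filterI hd (heta t _ e2)) (leftlim_ucc heta Detan Deta t0 e2)).
have [_ _ jump] := hup n.
have ht : t <= t <= t + d by rewrite lexx /=; lra.
have tt : 0 <= t <= t by rewrite t0 lexx.
move: (jump t t0 (hbelow t ht)) (hetan t tt) hleft.
by rewrite !ler_norml => ? /andP[? ?] /andP[? ?]; lra.
Qed.

Lemma limit_locally_nondecreasing u : 0 <= u -> ((phi u)%:E < r u)%E ->
  exists2 d, 0 < d & forall v, u <= v <= u + d -> eta u <= eta v.
Proof.
move=> u0 /(eventually_below_barrier u0)[d d0 hd].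
exists d => // v /andP[uv vd].
apply/ler_addgt0Pr => e e0; have e2 : 0 < e / 2 by rewrite divr_gt0.
have [n [hbelow hetan]] := filter_ex (filterI hd (heta (u + d) _ e2)).
have [_ mono _] := hup n.
have : etan n u <= etan n v.
  apply: mono => [|w /andP[uw wv]]; first by rewrite u0.
  by apply: hbelow; rewrite ltW //= (le_trans wv vd).
have hu : 0 <= u <= u + d by rewrite u0 /=; lra.
have hv : 0 <= v <= u + d by rewrite vd (le_trans u0 uv).
move: (hetan u hu) (hetan v hv); rewrite !ler_norml => /andP[? ?] /andP[? ?].
move=> ?; lra.
Qed.

Lemma limit_nondecreasing s t : 0 <= s <= t ->
  (forall u, s < u <= t -> ((phi u)%:E < r u)%E) -> eta s <= eta t.
Proof.
move=> /andP[s0 st] hlt; apply: le_of_locally_nondecreasing_oc st _ _ _.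
- exact: Deta.1 s s0.
- move=> u /andP[su ut]; have u0 : 0 < u by apply: le_lt_trans su.
  have [y hy] := Deta.2 u u0; exists y => //.
  by rewrite -(leftlim_cvg u0 hy); apply: limit_leftlim_le; rewrite ?ltW ?hlt ?su.
- move=> u /andP[su ut]; apply: limit_locally_nondecreasing.
    by rewrite (le_trans s0) ?ltW.
  by apply: hlt; rewrite su ltW.
Qed.

Lemma ESP_upper_limit : ESP_upper r phi eta.
Proof.
split; first exact: limit_below_barrier.
  exact: limit_nondecreasing.
exact: limit_leftlim_le.
Qed.

End UpperBarrierLimit.

Theorem proposition2p5 (R : realType)
  (ln : nat -> R -> \bar R) (rn : nat -> R -> \bar R) (psin : nat -> R -> R)
  (phin etan : nat -> R -> R)
  (l r : R -> \bar R) (psi phi : R -> R) :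
  (forall n, Dminus (ln n)) -> (forall n, Dplus (rn n)) ->
  (forall n t, 0 <= t -> (ln n t <= rn n t)%E) ->
  (forall n, D0 (psin n)) ->
  Dminus l -> Dplus r -> D0 psi ->
  ucc psin psi -> ucc_e ln l -> ucc_e rn r ->
  (forall n, ESP (ln n) (rn n) (psin n) (phin n) (etan n)) ->
  ucc phin phi ->
  ESP l r psi phi (fun t => phi t - psi t).
Proof.
move=> _ _ _ _ Dl Dr Dpsi hpsi hl hr hESP hphi.
have /all_and5[Dphin Detan hdec upper lower] :=
  fun n => (ESP_split _ _ _ _ _).1 (hESP n).
have Dphi := ucc_D0 hphi Dphin.
have Deta := D0B Dphi Dpsi.
have heta : ucc etan (fun t => phi t - psi t).
  by apply: ucc_eq (uccB hphi hpsi) _ => n t t0; rewrite hdec // addrC addKr.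
apply/ESP_split; split=> //; first by move=> t _; rewrite addrC subrK.
  by apply: ESP_upper_limit hphi heta hr Dphi Detan Deta _ upper => t /Dr.1.1.
apply: ESP_upper_limit (uccN hphi) (uccN heta) (ucc_eN hl) (D0N Dphi)
  (fun n => D0N (Detan n)) (D0N Deta) _ lower => t /Dl.1.1; exact: cvgeN.
Qed.
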